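(* Let $K_{\Delta p},K_{\Delta v},\lambda,\gamma_{\Delta p},\gamma_{\Delta v}>0$ and $a,b\ge0$. For each $N\in\mathbb{N}$ consider states $\tilde\chi_i=(x_{1,i},x_{2,i},x_{3,i})\in\mathbb{R}^3$, $i=0,\dots,N$, with dynamics $$\dot x_{1,i}=x_{2,i},\quad \dot x_{2,i}=-K_{\Delta p}x_{2,i}-K_{\Delta v}\big(x_{2,i}+K_{\Delta p}x_{1,i}\big)-x_{1,i}-x_{3,i},\quad \dot x_{3,i}=-\lambda x_{3,i}+a\psi^{i-1}_{\Delta p}+b\psi^{i-1}_{\Delta v},$$ where $\psi^{-1}_{\Delta p}=\psi^{-1}_{\Delta v}=0$ and, for $i\ge1$, with $m=i-1$, $$\psi^{m}_{\Delta p}=\gamma_{\Delta p}\,\mathrm{sign}\Big(\tfrac{1}{m+1}\textstyle\sum_{j=0}^{m}x_{1,j}\Big)\sqrt{\sigma^2_{1,m}},\qquad \psi^{m}_{\Delta v}=\gamma_{\Delta v}\,\mathrm{sign}\Big(\tfrac{1}{m+1}\textstyle\sum_{j=0}^{m}x_{2,j}\Big)\sqrt{\sigma^2_{2,m}},$$ $\sigma^2_{k,m}$ being the population variance of $x_{k,0},\dots,x_{k,m}$. (Here $x_{1,i}=\Delta p_i+\Delta\bar p$, $x_{2,i}=\Delta v_i$, $x_{3,i}=\rho_i$ are the distance error, speed difference and macroscopic state of the $i$-th leader–follower pair under the constant-spacing control law $u_i=u_{i-1}-K_{\Delta p}\Delta v_i-K_{\Delta v}(\Delta v_i+K_{\Delta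 p}(\Delta p_i+\Delta\bar p))-(\Delta p_i+\Delta\bar p)-\rho_i$.) Assume solutions exist on $[0,\infty)$. Then: (1) the origin of each isolated subsystem (i.e. with $a\psi^{i-1}_{\Delta p}+b\psi^{i-1}_{\Delta v}$ replaced by $0$) is globally exponentially stable; (2) there exist $\beta^{cp}\in\mathcal{KL}$ and $\tilde\gamma^{cp}>0$ such that for every $N$, every solution, every $i$ and all $t\ge0$, $$|\tilde\chi_i(t)|\le\beta^{cp}(|\tilde\chi_i(0)|,t)+\tilde\gamma^{cp}\max_{j=0,\dots,i-1}\sup_{0\le\tau\le t}|\tilde\chi_j(\tau)|;$$ (3) there exist $a,b\ge0$ (not both zero) for which this holds with $\tilde\gamma^{cp}\in(0,1)$, and for such $a,b$ the origin of the interconnected system is Asymptotically String Stable.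
   Context: $|\cdot|$ is the Euclidean norm; $\mathrm{sign}$ takes values in $\{-1,0,1\}$. String Stability of the origin means: for every $\epsilon>0$ there exists $\delta>0$ such that for all $N\in\mathbb{N}$ and every solution, $\max_{i=0,\dots,N}|\tilde\chi_i(0)|<\delta$ implies $\max_{i=0,\dots,N}|\tilde\chi_i(t)|<\epsilon$ for all $t\ge0$. Asymptotic String Stability means String Stability together with: for all $N$, every solution satisfies $\lim_{t\to\infty}|\tilde\chi_i(t)|=0$ for all $i=0,\dots,N$. *)

From Stdlib Require Import Reals Lra.
From Coquelicot Require Import Coquelicot.
Open Scope R_scope.

Definition Rsign (x : R) : R :=
  if Rlt_dec 0 x then 1 else if Rlt_dec x 0 then -1 else 0.

(* mean and population variance of y 0, ..., y m  (sum_f_R0 y m = y 0 + ... + y m) *)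
Definition meanR (y : nat -> R) (m : nat) : R := sum_f_R0 y m / INR (S m).
Definition varR (y : nat -> R) (m : nat) : R :=
  sum_f_R0 (fun j => (y j - meanR y m) ^ 2) m / INR (S m).

Definition psi (g : R) (y : nat -> R) (m : nat) : R :=
  g * Rsign (meanR y m) * sqrt (varR y m).

Definition coupling (gp gv a b : R) (x1 x2 : nat -> R -> R) (i : nat) (t : R) : R :=
  match i with
  | O => 0
  | S m => a * psi gp (fun j => x1 j t) m + b * psi gv (fun j => x2 j t) m
  end.

(* f is a (classical) solution of f' = df on [0, oo): right-continuous at 0,
   differentiable with derivative df t at every t > 0 *)
Definition traj_on (f df : R -> R) : Prop :=
  (forall eps, 0 < eps -> exists delta, 0 < delta /\
      forall s, 0 <= s < delta -> Rabs (f s - f 0) < eps) /\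
  (forall t, 0 < t -> is_derive f t (df t)).

Definition pair_sol (Kp Kv lam : R) (u : R -> R) (x1 x2 x3 : R -> R) : Prop :=
  traj_on x1 x2 /\
  traj_on x2 (fun t => - Kp * x2 t - Kv * (x2 t + Kp * x1 t) - x1 t - x3 t) /\
  traj_on x3 (fun t => - lam * x3 t + u t).

Definition platoon_sol (Kp Kv lam gp gv a b : R) (N : nat)
    (x1 x2 x3 : nat -> R -> R) : Prop :=
  forall i, (i <= N)%nat ->
    pair_sol Kp Kv lam (coupling gp gv a b x1 x2 i) (x1 i) (x2 i) (x3 i).

Definition nrm3 (p q r : R) : R := sqrt (p ^ 2 + q ^ 2 + r ^ 2).
Definition chi_norm (x1 x2 x3 : nat -> R -> R) (i : nat) (t : R) : R :=
  nrm3 (x1 i t) (x2 i t) (x3 i t).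

Definition classK (al : R -> R) : Prop :=
  al 0 = 0 /\
  (forall r, 0 <= r -> forall eps, 0 < eps -> exists delta, 0 < delta /\
      forall s, 0 <= s -> Rabs (s - r) < delta -> Rabs (al s - al r) < eps) /\
  (forall r s, 0 <= r -> r < s -> al r < al s).

Definition classKL (beta : R -> R -> R) : Prop :=
  (forall t, 0 <= t -> classK (fun r => beta r t)) /\
  (forall r, 0 <= r ->
     (forall t1 t2, 0 <= t1 -> t1 <= t2 -> beta r t2 <= beta r t1) /\
     is_lim (fun t => beta r t) p_infty (Finite 0)).

(* |chi_i(t)| <= beta(|chi_i(0)|,t) + g * max_{j<i} sup_{[0,t]} |chi_j|,
   the max/sup written out: for every M >= 0 bounding |chi_j(tau)| for j<i,
   tau in [0,t] (for i = 0 the max over the empty set is 0). *)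
Definition gain_estimate (Kp Kv lam gp gv a b : R) (beta : R -> R -> R) (g : R) : Prop :=
  forall (N : nat) (x1 x2 x3 : nat -> R -> R),
    platoon_sol Kp Kv lam gp gv a b N x1 x2 x3 ->
    forall i, (i <= N)%nat -> forall t, 0 <= t ->
    forall M, 0 <= M ->
      (forall j tau, (j < i)%nat -> 0 <= tau <= t -> chi_norm x1 x2 x3 j tau <= M) ->
      chi_norm x1 x2 x3 i t <= beta (chi_norm x1 x2 x3 i 0) t + g * M.

Definition StringStable (Kp Kv lam gp gv a b : R) : Prop :=
  forall eps, 0 < eps -> exists delta, 0 < delta /\
    forall (N : nat) (x1 x2 x3 : nat -> R -> R),
      platoon_sol Kp Kv lam gp gv a b N x1 x2 x3 ->
      (forall i, (i <= N)%nat -> chi_norm x1 x2 x3 i 0 < delta) ->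
      forall t, 0 <= t -> forall i, (i <= N)%nat -> chi_norm x1 x2 x3 i t < eps.

Definition AsymptoticallyStringStable (Kp Kv lam gp gv a b : R) : Prop :=
  StringStable Kp Kv lam gp gv a b /\
  forall (N : nat) (x1 x2 x3 : nat -> R -> R),
    platoon_sol Kp Kv lam gp gv a b N x1 x2 x3 ->
    forall i, (i <= N)%nat ->
      is_lim (fun t => chi_norm x1 x2 x3 i t) p_infty (Finite 0).

From Stdlib Require Import Reals Lra Lia Wf_nat.
From Coquelicot Require Import Coquelicot.
Open Scope R_scope.

(** Each pair, driven by an external input u, admits the
    quadratic Lyapunov function V = lam Kv (x1^2 + (x2 + Kp x1)^2) + x3^2,
    which satisfies V' <= -k V + 2 u^2 / lam; a comparison argument turns this
    into the ISS estimate |x(t)| <= C exp(-k t/2) |x(0)| + G sup |u|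
    ([pair_iss]).  With u = 0 this is part (1).  The coupling input of pair i
    is a psi_p + b psi_v, and since sample means and standard deviations of
    values bounded by M are bounded by M and 2M, it is bounded by
    2 (a gp + b gv) times the predecessors' states ([coupling_bound]); this
    gives the gain estimate (2) ([platoon_gain_estimate]) and, for a small
    enough, a gain below one (3a).  Finally a small-gain argument along the
    platoon yields a uniform bound, hence string stability, and an induction
    on the position in the platoon yields convergence of every pair (3b)
    ([asymptotic_string_stability_of_gain]). *)

(** Real-valued specialisations of Coquelicot's continuity rules, in a form
    that [apply] can use directly on polynomial expressions. *)
Lemma Rcontinuous_plus (f g : R -> R) x :
  continuous f x -> continuous g x -> continuous (fun y => f y + g y) x.
Proof. intros; now apply (continuous_plus f g). Qed.

Lemma Rcontinuous_minus (f g : R -> R) x :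
  continuous f x -> continuous g x -> continuous (fun y => f y - g y) x.
Proof. intros; now apply (continuous_minus f g). Qed.

Lemma Rcontinuous_mult (f g : R -> R) x :
  continuous f x -> continuous g x -> continuous (fun y => f y * g y) x.
Proof. intros; now apply (continuous_mult f g). Qed.

Lemma Rcontinuous_const (c x : R) : continuous (fun _ : R => c) x.
Proof. apply continuous_const. Qed.

Lemma continuous_of_eps_delta (g : R -> R) s :
  (forall eps, 0 < eps -> exists d, 0 < d /\
     forall y, Rabs (y - s) < d -> Rabs (g y - g s) < eps) ->
  continuous g s.
Proof.
  intros H. apply continuity_pt_filterlim. intros eps Heps.
  destruct (H eps Heps) as [d [Hd Hy]].
  exists d; split; auto. intros y [_ Hy']. now apply Hy.
Qed.

Lemma eps_delta_of_continuous (g : R -> R) s : continuous g s ->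
  forall eps, 0 < eps -> exists d, 0 < d /\
    forall y, Rabs (y - s) < d -> Rabs (g y - g s) < eps.
Proof.
  intros H eps He. apply continuity_pt_filterlim in H.
  destruct (H eps He) as [d [Hd Hy]]. exists d; split; auto.
  intros y Hys. destruct (Req_dec y s) as [->|Hne].
  - rewrite Rminus_diag, Rabs_R0; auto.
  - apply Hy. split; [split; [exact I| auto] | exact Hys].
Qed.

Lemma ball_R_interval (x y : R) (e : posreal) : ball x e y -> x - e < y < x + e.
Proof. intros H. change (Rabs (y - x) < e) in H. apply Rabs_def2 in H. lra. Qed.

(** A solution on [0, oo), frozen to its initial value for negative times,
    is continuous on [0, oo): differentiability gives continuity for t > 0
    and right-continuity at 0 is part of [traj_on]. *)
Lemma traj_continuous f df : traj_on f df ->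
  forall s, 0 <= s -> continuous (fun y => f (Rmax 0 y)) s.
Proof.
  intros [H0 Hd] s Hs. destruct (Rle_lt_or_eq_dec _ _ Hs) as [Hp|<-].
  - apply continuous_ext_loc with f.
    + exists (mkposreal s Hp). intros y Hy.
      apply ball_R_interval in Hy; simpl in Hy. now rewrite Rmax_right by lra.
    + apply (ex_derive_continuous (K:=R_AbsRing) (V:=R_NormedModule)).
      exists (df s). now apply Hd.
  - apply continuous_of_eps_delta. intros eps He.
    destruct (H0 eps He) as [d [Hd0 Hy]].
    exists d; split; [exact Hd0|]. intros y Hyd. rewrite (Rmax_left 0 0) by lra.
    destruct (Rle_dec y 0).
    + rewrite Rmax_left, Rminus_diag, Rabs_R0 by lra; auto.
    + rewrite Rmax_right by lra. apply Hy. rewrite Rminus_0_r in Hyd.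
      apply Rabs_def2 in Hyd; lra.
Qed.

(** Comparison principle for the linear differential inequality
    W' <= -k W + D on [0, t]:  W t <= exp(-k t) W 0 + D / k.
    Proof: exp(k s) (W s - D/k) is nonincreasing, by the mean value theorem. *)
Lemma linear_comparison (W dW : R -> R) k D t :
  0 < k -> 0 <= D -> 0 <= t ->
  (forall s, 0 <= s <= t -> continuous (fun y => W (Rmax 0 y)) s) ->
  (forall s, 0 < s < t -> is_derive W s (dW s)) ->
  (forall s, 0 <= s <= t -> dW s <= - k * W s + D) ->
  W t <= exp (- k * t) * W 0 + D / k.
Proof.
  intros Hk HD Ht Hc Hd Hineq.
  set (h := fun s => exp (k * s) * (W (Rmax 0 s) - D / k)).
  set (dh := fun s => exp (k * s) * (k * (W s - D / k) + dW s)).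
  destruct (MVT_gen h 0 t dh) as [c [Hc1 Heq]].
  - rewrite Rmin_left, Rmax_right by lra. intros x Hx.
    apply is_derive_ext_loc with (fun s => exp (k * s) * (W s - D / k)).
    + exists (mkposreal x (proj1 Hx)). intros y Hy.
      apply ball_R_interval in Hy; simpl in Hy. unfold h. now rewrite Rmax_right by lra.
    + replace (dh x) with (plus (mult (k * exp (k * x)) (W x - D / k))
                                (mult (exp (k * x)) (dW x - 0)))
        by (unfold dh, plus, mult; simpl; ring).
      apply (is_derive_mult (fun s => exp (k * s)) (fun s => W s - D / k)).
      * auto_derive; auto; ring.
      * apply (is_derive_minus W (fun _ => D / k)); [apply Hd; lra|].
        apply (is_derive_const (K:=R_AbsRing) (V:=R_NormedModule)).
      * intros; apply Rmult_comm.
  - rewrite Rmin_left, Rmax_right by lra. intros x Hx.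
    apply continuity_pt_filterlim. change (continuous h x). unfold h.
    apply Rcontinuous_mult.
    + apply continuous_exp_comp, Rcontinuous_mult;
        [apply Rcontinuous_const | apply continuous_id].
    + apply Rcontinuous_minus; [apply Hc; lra | apply Rcontinuous_const].
  - rewrite Rmin_left, Rmax_right in Hc1 by lra.
    assert (Hdh : dh c <= 0).
    { unfold dh. pose proof (exp_pos (k * c)).
      assert (k * (W c - D / k) + dW c <= 0).
      { specialize (Hineq c Hc1).
        replace (k * (W c - D / k)) with (k * W c - D) by (field; lra). lra. }
      nra. }
    unfold h in Heq. rewrite (Rmax_right 0 t), (Rmax_left 0 0), Rmult_0_r, exp_0 in Heq
      by lra.
    assert (HE : exp (k * t) * exp (- k * t) = 1).
    { rewrite <- exp_plus. replace (k * t + - k * t) with 0 by ring. apply exp_0. }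
    pose proof (exp_pos (k * t)). pose proof (exp_pos (- k * t)).
    assert (0 <= D / k) by (apply Rdiv_le_0_compat; lra).
    set (q := D / k) in *. set (E := exp (k * t)) in *. set (F := exp (- k * t)) in *.
    assert (E * (W t - q) <= W 0 - q) by nra.
    assert (W t - q <= F * (W 0 - q)).
    { replace (W t - q) with (F * (E * (W t - q)))
        by (transitivity ((E * F) * (W t - q)); [ring | rewrite HE; ring]).
      apply Rmult_le_compat_l; lra. }
    nra.
Qed.

(** * Input-to-state stability of one leader-follower pair *)

Section PairISS.

Variables Kp Kv lam : R.
Hypotheses (HKp : 0 < Kp) (HKv : 0 < Kv) (Hlam : 0 < lam).

Definition lyap (a1 a2 a3 : R) : R :=
  lam * Kv * (a1 ^ 2 + (a2 + Kp * a1) ^ 2) + a3 ^ 2.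

Definition lyap_rate (a1 a2 a3 v : R) : R :=
  lam * Kv * (2 * a1 * a2
              + 2 * (a2 + Kp * a1) * (- Kv * (a2 + Kp * a1) - a1 - a3))
  + 2 * a3 * (- lam * a3 + v).

(** Decay rate of [lyap] and the constants of the quadratic sandwich
    |x|^2 <= lyap_lo * V and V <= lyap_hi * |x|^2. *)
Definition decay_rate : R := Rmin (2 * Kp) (Rmin Kv (lam / 2)).
Definition lyap_lo : R := (3 + 2 * Kp ^ 2) * (1 + / (lam * Kv)).
Definition lyap_hi : R := lam * Kv * (3 + 2 * Kp ^ 2) + 1.

(** Resulting constants of the ISS estimate of a pair:
    |x(t)| <= overshoot * exp(-decay_rate/2 * t) |x(0)| + iss_gain * sup |u|. *)
Definition overshoot : R := sqrt (lyap_lo * lyap_hi).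
Definition iss_gain : R := sqrt (lyap_lo * 2 / (lam * decay_rate)).

Lemma decay_rate_pos : 0 < decay_rate.
Proof. unfold decay_rate. repeat apply Rmin_glb_lt; lra. Qed.

Lemma lyap_lo_pos : 0 < lyap_lo.
Proof.
  unfold lyap_lo. assert (0 < / (lam * Kv)) by (apply Rinv_0_lt_compat; nra). nra.
Qed.

Lemma lyap_hi_pos : 0 < lyap_hi.
Proof. unfold lyap_hi. assert (0 < lam * Kv) by nra. nra. Qed.

Lemma overshoot_pos : 0 < overshoot.
Proof. pose proof lyap_lo_pos; pose proof lyap_hi_pos. apply sqrt_lt_R0; nra. Qed.

Lemma iss_gain_pos : 0 < iss_gain.
Proof.
  pose proof lyap_lo_pos; pose proof decay_rate_pos.
  apply sqrt_lt_R0, Rdiv_lt_0_compat; nra.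
Qed.

Lemma lyap_lower a1 a2 a3 : a1 ^ 2 + a2 ^ 2 + a3 ^ 2 <= lyap_lo * lyap a1 a2 a3.
Proof.
  unfold lyap_lo, lyap.
  assert (HP : 0 < / (lam * Kv)) by (apply Rinv_0_lt_compat; nra).
  assert (HPe : lam * Kv * / (lam * Kv) = 1) by (field; lra).
  set (P := / (lam * Kv)) in *. clearbody P.
  set (e := a2 + Kp * a1). replace a2 with (e - Kp * a1) by (unfold e; ring).
  replace (e - Kp * a1 + Kp * a1) with e by ring. clearbody e.
  assert (Hsq : a1 ^ 2 + e ^ 2 + a3 ^ 2 <= (1 + P) * (lam * Kv * (a1 ^ 2 + e ^ 2) + a3 ^ 2)).
  { replace ((1 + P) * (lam * Kv * (a1 ^ 2 + e ^ 2) + a3 ^ 2)) with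
      ((lam * Kv + lam * Kv * P) * (a1 ^ 2 + e ^ 2) + (1 + P) * a3 ^ 2) by ring.
    rewrite HPe. assert (0 <= lam * Kv * (a1 ^ 2 + e ^ 2)) by (apply Rmult_le_pos; nra).
    assert (0 <= P * a3 ^ 2) by (apply Rmult_le_pos; nra). nra. }
  assert (Hchange : a1 ^ 2 + (e - Kp * a1) ^ 2 + a3 ^ 2
                    <= (3 + 2 * Kp ^ 2) * (a1 ^ 2 + e ^ 2 + a3 ^ 2)).
  { assert (0 <= (e + Kp * a1) ^ 2) by apply pow2_ge_0.
    assert (0 <= Kp ^ 2 * e ^ 2) by nra. assert (0 <= Kp ^ 2 * a3 ^ 2) by nra. nra. }
  rewrite Rmult_assoc. eapply Rle_trans; [exact Hchange|].
  apply Rmult_le_compat_l; [nra | exact Hsq].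
Qed.

Lemma lyap_upper a1 a2 a3 : lyap a1 a2 a3 <= lyap_hi * (a1 ^ 2 + a2 ^ 2 + a3 ^ 2).
Proof.
  unfold lyap, lyap_hi. assert (0 < lam * Kv) by nra.
  assert (0 <= (a2 - Kp * a1) ^ 2) by apply pow2_ge_0.
  assert (Hchange : a1 ^ 2 + (a2 + Kp * a1) ^ 2
                    <= (3 + 2 * Kp ^ 2) * (a1 ^ 2 + a2 ^ 2 + a3 ^ 2)).
  { assert (0 <= Kp ^ 2 * a2 ^ 2) by nra. assert (0 <= Kp ^ 2 * a3 ^ 2) by nra. nra. }
  assert (lam * Kv * (a1 ^ 2 + (a2 + Kp * a1) ^ 2)
          <= lam * Kv * ((3 + 2 * Kp ^ 2) * (a1 ^ 2 + a2 ^ 2 + a3 ^ 2)))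
    by (apply Rmult_le_compat_l; lra).
  assert (0 <= a1 ^ 2) by nra. assert (0 <= a2 ^ 2) by nra. nra.
Qed.

(** With e = x2 + Kp x1 one has
    V' = -2 lam Kv Kp x1^2 - 2 lam Kv^2 e^2 - 2 lam Kv e x3 - 2 lam x3^2 + 2 x3 v;
    the cross terms are absorbed by Young's inequality. *)
Lemma lyap_dissipation a1 a2 a3 v :
  lyap_rate a1 a2 a3 v <= - decay_rate * lyap a1 a2 a3 + 2 * v ^ 2 / lam.
Proof.
  unfold lyap_rate, lyap.
  assert (Hk1 : decay_rate <= 2 * Kp) by apply Rmin_l.
  assert (Hk2 : decay_rate <= Kv) by (eapply Rle_trans; [apply Rmin_r | apply Rmin_l]).
  assert (Hk3 : decay_rate <= lam / 2) by (eapply Rle_trans; [apply Rmin_r | apply Rmin_r]).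
  set (k := decay_rate) in *. set (e := a2 + Kp * a1).
  replace a2 with (e - Kp * a1) by (unfold e; ring).
  replace (e - Kp * a1 + Kp * a1) with e by ring.
  assert (F1 : k * (lam * Kv * a1 ^ 2) <= 2 * Kp * (lam * Kv * a1 ^ 2)).
  { apply Rmult_le_compat_r; [|lra]. apply Rmult_le_pos; [nra | apply pow2_ge_0]. }
  assert (F2 : k * (lam * Kv * e ^ 2) <= Kv * (lam * Kv * e ^ 2)).
  { apply Rmult_le_compat_r; [|lra]. apply Rmult_le_pos; [nra | apply pow2_ge_0]. }
  assert (F3 : k * a3 ^ 2 <= lam / 2 * a3 ^ 2)
    by (apply Rmult_le_compat_r; [apply pow2_ge_0 | lra]).
  assert (F4 : 0 <= lam * (Kv * e + a3) ^ 2)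
    by (apply Rmult_le_pos; [lra | apply pow2_ge_0]).
  assert (Young : 2 * a3 * v <= lam / 2 * a3 ^ 2 + 2 * v ^ 2 / lam).
  { assert (0 <= lam / 2 * (a3 - 2 * v / lam) ^ 2)
      by (apply Rmult_le_pos; [lra | apply pow2_ge_0]).
    replace (lam / 2 * (a3 - 2 * v / lam) ^ 2)
      with (lam / 2 * a3 ^ 2 + 2 * v ^ 2 / lam - 2 * a3 * v) in H by (field; lra).
    lra. }
  nra.
Qed.

Lemma lyap_derive u x1 x2 x3 s :
  pair_sol Kp Kv lam u x1 x2 x3 -> 0 < s ->
  is_derive (fun y => lyap (x1 y) (x2 y) (x3 y)) s
            (lyap_rate (x1 s) (x2 s) (x3 s) (u s)).
Proof.
  intros [[_ D1] [[_ D2] [_ D3]]] Hs.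
  specialize (D1 s Hs). specialize (D2 s Hs). specialize (D3 s Hs).
  unfold lyap, lyap_rate. auto_derive.
  - repeat split; eexists; eauto.
  - replace (Derive (fun y => x1 y) s) with (x2 s) by (symmetry; now apply is_derive_unique).
    replace (Derive (fun y => x2 y) s)
      with (- Kp * x2 s - Kv * (x2 s + Kp * x1 s) - x1 s - x3 s)
      by (symmetry; now apply is_derive_unique).
    replace (Derive (fun y => x3 y) s) with (- lam * x3 s + u s)
      by (symmetry; now apply is_derive_unique).
    ring.
Qed.

Lemma pair_lyap_decay u x1 x2 x3 t U :
  pair_sol Kp Kv lam u x1 x2 x3 -> 0 <= t ->
  (forall s, 0 <= s <= t -> Rabs (u s) <= U) ->
  lyap (x1 t) (x2 t) (x3 t) <=
    exp (- decay_rate * t) * lyap (x1 0) (x2 0) (x3 0) + 2 * U ^ 2 / lam / decay_rate.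
Proof.
  intros Hsol Ht Hu.
  apply (linear_comparison (fun s => lyap (x1 s) (x2 s) (x3 s))
                           (fun s => lyap_rate (x1 s) (x2 s) (x3 s) (u s))).
  - exact decay_rate_pos.
  - apply Rdiv_le_0_compat; [nra | lra].
  - exact Ht.
  - destruct Hsol as [T1 [T2 T3]]. intros s [Hs _].
    pose proof (traj_continuous _ _ T1 s Hs).
    pose proof (traj_continuous _ _ T2 s Hs).
    pose proof (traj_continuous _ _ T3 s Hs).
    unfold lyap.
    repeat first [ apply Rcontinuous_plus | apply Rcontinuous_mult
                 | apply Rcontinuous_const | assumption ].
  - intros s [Hs _]. now apply (lyap_derive u).
  - intros s Hs. eapply Rle_trans; [apply lyap_dissipation|].
    assert (u s ^ 2 <= U ^ 2).
    { rewrite <- (Rsqr_pow2 (u s)), Rsqr_abs, Rsqr_pow2.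
      apply pow_incr. split; [apply Rabs_pos | auto]. }
    unfold Rdiv. assert (0 < / lam) by (apply Rinv_0_lt_compat; lra). nra.
Qed.

Lemma pair_iss u x1 x2 x3 t U :
  pair_sol Kp Kv lam u x1 x2 x3 -> 0 <= t -> 0 <= U ->
  (forall s, 0 <= s <= t -> Rabs (u s) <= U) ->
  nrm3 (x1 t) (x2 t) (x3 t) <=
    overshoot * exp (- (decay_rate / 2) * t) * nrm3 (x1 0) (x2 0) (x3 0)
    + iss_gain * U.
Proof.
  intros Hsol Ht HU Hu.
  pose proof (pair_lyap_decay u x1 x2 x3 t U Hsol Ht Hu) as Hdecay.
  pose proof decay_rate_pos as Hk. pose proof lyap_lo_pos. pose proof lyap_hi_pos.
  set (k := decay_rate) in *.
  set (n0 := x1 0 ^ 2 + x2 0 ^ 2 + x3 0 ^ 2).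
  assert (Hlow := lyap_lower (x1 t) (x2 t) (x3 t)).
  assert (Hup : lyap (x1 0) (x2 0) (x3 0) <= lyap_hi * n0) by apply lyap_upper.
  assert (Hn0 : 0 <= n0) by (unfold n0; nra).
  unfold nrm3. fold n0.
  set (nt := x1 t ^ 2 + x2 t ^ 2 + x3 t ^ 2) in *.
  assert (Hfree : 0 <= overshoot * exp (- (k / 2) * t) * sqrt n0).
  { pose proof overshoot_pos; pose proof (exp_pos (- (k / 2) * t)).
    pose proof (sqrt_pos n0). apply Rmult_le_pos; nra. }
  assert (Hforced : 0 <= iss_gain * U) by (pose proof iss_gain_pos; nra).
  (* sqrt S <= A + B as soon as S <= A^2 + B^2 with A, B >= 0 *)
  rewrite <- (sqrt_pow2 (_ + _)) by lra.
  apply sqrt_le_1_alt.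
  assert (Hsq : (overshoot * exp (- (k / 2) * t) * sqrt n0) ^ 2
                = lyap_lo * lyap_hi * exp (- k * t) * n0).
  { replace (- k * t) with (- (k / 2) * t + - (k / 2) * t) by field.
    rewrite exp_plus, !Rpow_mult_distr. unfold overshoot.
    rewrite !pow2_sqrt by nra. ring. }
  assert (Hsq' : (iss_gain * U) ^ 2 = lyap_lo * (2 * U ^ 2 / lam / k)).
  { rewrite Rpow_mult_distr. unfold iss_gain. fold k.
    rewrite pow2_sqrt by (apply Rdiv_le_0_compat; nra). field. lra. }
  pose proof (exp_pos (- k * t)).
  assert (lyap (x1 0) (x2 0) (x3 0) * exp (- k * t) <= lyap_hi * n0 * exp (- k * t))
    by (apply Rmult_le_compat_r; lra).
  nra.
Qed.

End PairISS.

Lemma linear_classK c : 0 < c -> classK (fun r => c * r).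
Proof.
  intros Hc. split; [ring | split].
  - intros r _ eps He. exists (eps / c). split; [apply Rdiv_lt_0_compat; lra|].
    intros s _ Hsr.
    replace (c * s - c * r) with (c * (s - r)) by ring.
    rewrite Rabs_mult, (Rabs_pos_eq c) by lra.
    apply Rmult_lt_compat_l with (r := c) in Hsr; [|lra].
    replace (c * (eps / c)) with eps in Hsr by (field; lra). exact Hsr.
  - intros r s _ Hrs. now apply Rmult_lt_compat_l.
Qed.

Lemma exp_decay_lim c q : 0 < q -> is_lim (fun t => c * exp (- q * t)) p_infty 0.
Proof.
  intros Hq.
  replace (Finite 0) with (Rbar_mult c 0) by (simpl; f_equal; ring).
  apply is_lim_scal_l.
  apply (is_lim_comp exp (fun t => - q * t) p_infty 0 m_infty).
  - apply is_lim_exp_m.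
  - replace m_infty with (Rbar_mult (- q) p_infty).
    + apply is_lim_scal_l, is_lim_id.
    + simpl. case Rle_dec; [intros; exfalso; lra | reflexivity].
  - exists 0. intros; discriminate.
Qed.

Definition exp_KL (C q r t : R) : R := C * exp (- q * t) * r.

Lemma exp_KL_classKL C q : 0 < C -> 0 < q -> classKL (exp_KL C q).
Proof.
  intros HC Hq. split.
  - intros t _. apply linear_classK. pose proof (exp_pos (- q * t)). nra.
  - intros r Hr. split.
    + intros t1 t2 _ H12. unfold exp_KL.
      apply Rmult_le_compat_r; [exact Hr|]. apply Rmult_le_compat_l; [lra|].
      destruct (Rle_lt_or_eq_dec _ _ H12) as [H|<-]; [|lra].
      left. apply exp_increasing. nra.
    + apply is_lim_ext with (fun t => C * r * exp (- q * t)).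
      * intros t. unfold exp_KL. ring.
      * now apply exp_decay_lim.
Qed.

(** * Size of the coupling input *)

Lemma Rsign_bound x : Rabs (Rsign x) <= 1.
Proof.
  unfold Rsign. destruct (Rlt_dec 0 x); [|destruct (Rlt_dec x 0)];
    unfold Rabs; destruct (Rcase_abs _); lra.
Qed.

Lemma meanR_bound (y : nat -> R) m M :
  (forall j, (j <= m)%nat -> Rabs (y j) <= M) -> Rabs (meanR y m) <= M.
Proof.
  intros H. assert (Hn : 0 < INR (S m)) by (apply lt_0_INR; lia).
  unfold meanR, Rdiv. rewrite Rabs_mult, Rabs_inv, (Rabs_pos_eq (INR (S m))) by lra.
  apply (Rmult_le_reg_r (INR (S m))); auto.
  rewrite Rmult_assoc, Rinv_l, Rmult_1_r by lra.
  eapply Rle_trans; [apply Rsum_abs|]. rewrite <- sum_cte. now apply sum_Rle.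
Qed.

Lemma stddev_bound (y : nat -> R) m M : 0 <= M ->
  (forall j, (j <= m)%nat -> Rabs (y j) <= M) -> sqrt (varR y m) <= 2 * M.
Proof.
  intros HM H. assert (Hn : 0 < INR (S m)) by (apply lt_0_INR; lia).
  assert (Hmean := meanR_bound y m M H).
  rewrite <- (sqrt_pow2 (2 * M)) by lra. apply sqrt_le_1_alt.
  unfold varR. apply (Rmult_le_reg_r (INR (S m))); auto. unfold Rdiv.
  rewrite Rmult_assoc, Rinv_l, Rmult_1_r by lra.
  rewrite <- sum_cte. apply sum_Rle. intros j Hj. specialize (H j Hj).
  apply Rabs_le_between in H. apply Rabs_le_between in Hmean. nra.
Qed.

Lemma psi_bound g y m M : 0 < g -> 0 <= M ->
  (forall j, (j <= m)%nat -> Rabs (y j) <= M) -> Rabs (psi g y m) <= g * (2 * M).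
Proof.
  intros Hg HM H. unfold psi.
  rewrite !Rabs_mult, (Rabs_pos_eq g), (Rabs_pos_eq (sqrt _)) by (lra || apply sqrt_pos).
  pose proof (Rsign_bound (meanR y m)). pose proof (stddev_bound y m M HM H).
  pose proof (sqrt_pos (varR y m)). pose proof (Rabs_pos (Rsign (meanR y m))).
  rewrite Rmult_assoc. apply Rmult_le_compat_l; nra.
Qed.

Lemma abs_le_nrm3_1 a b c : Rabs a <= nrm3 a b c.
Proof.
  unfold nrm3. rewrite <- sqrt_Rsqr_abs. apply sqrt_le_1_alt. unfold Rsqr.
  pose proof (pow2_ge_0 b). pose proof (pow2_ge_0 c). nra.
Qed.

Lemma abs_le_nrm3_2 a b c : Rabs b <= nrm3 a b c.
Proof.
  unfold nrm3. rewrite <- sqrt_Rsqr_abs. apply sqrt_le_1_alt. unfold Rsqr.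
  pose proof (pow2_ge_0 a). pose proof (pow2_ge_0 c). nra.
Qed.

Lemma coupling_bound gp gv a b x1 x2 x3 i s M :
  0 < gp -> 0 < gv -> 0 <= a -> 0 <= b -> 0 <= M ->
  (forall j, (j < i)%nat -> chi_norm x1 x2 x3 j s <= M) ->
  Rabs (coupling gp gv a b x1 x2 i s) <= 2 * (a * gp + b * gv) * M.
Proof.
  intros Hgp Hgv Ha Hb HM H. destruct i as [|m]; simpl.
  - rewrite Rabs_R0. apply Rmult_le_pos; [nra | lra].
  - assert (P1 : Rabs (psi gp (fun j => x1 j s) m) <= gp * (2 * M)).
    { apply psi_bound; auto. intros j Hj.
      eapply Rle_trans; [apply abs_le_nrm3_1 | apply H; lia]. }
    assert (P2 : Rabs (psi gv (fun j => x2 j s) m) <= gv * (2 * M)).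
    { apply psi_bound; auto. intros j Hj.
      eapply Rle_trans; [apply abs_le_nrm3_2 | apply H; lia]. }
    eapply Rle_trans; [apply Rabs_triang|].
    rewrite !Rabs_mult, (Rabs_pos_eq a), (Rabs_pos_eq b) by lra.
    pose proof (Rabs_pos (psi gp (fun j => x1 j s) m)).
    pose proof (Rabs_pos (psi gv (fun j => x2 j s) m)).
    nra.
Qed.

Definition coupling_gain (Kp Kv lam gp gv a b : R) : R :=
  2 * iss_gain Kp Kv lam * (a * gp + b * gv).

Lemma platoon_gain_estimate Kp Kv lam gp gv a b g :
  0 < Kp -> 0 < Kv -> 0 < lam -> 0 < gp -> 0 < gv -> 0 <= a -> 0 <= b ->
  coupling_gain Kp Kv lam gp gv a b <= g ->
  gain_estimate Kp Kv lam gp gv a b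
    (exp_KL (overshoot Kp Kv lam) (decay_rate Kp Kv lam / 2)) g.
Proof.
  intros HKp HKv Hl Hgp Hgv Ha Hb Hg N x1 x2 x3 Hsol i Hi t Ht M HM Hbd.
  assert (HU : 0 <= 2 * (a * gp + b * gv) * M) by (apply Rmult_le_pos; nra).
  eapply Rle_trans.
  { apply (pair_iss Kp Kv lam HKp HKv Hl _ _ _ _ t _ (Hsol i Hi) Ht HU).
    intros s Hs. apply coupling_bound with (x3 := x3); auto. }
  unfold exp_KL, chi_norm, coupling_gain in *.
  assert (2 * iss_gain Kp Kv lam * (a * gp + b * gv) * M <= g * M)
    by (apply Rmult_le_compat_r; auto).
  lra.
Qed.

(** * From a gain below one to asymptotic string stability *)

Lemma chi_norm_nonneg x1 x2 x3 i t : 0 <= chi_norm x1 x2 x3 i t.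
Proof. apply sqrt_pos. Qed.

Section ClassKL.

Variable beta : R -> R -> R.
Hypothesis Hbeta : classKL beta.

Lemma classKL_mono_r t r s : 0 <= t -> 0 <= r -> r <= s -> beta r t <= beta s t.
Proof.
  intros Ht Hr Hrs. destruct (proj1 Hbeta t Ht) as [_ [_ Hinc]].
  destruct (Rle_lt_or_eq_dec _ _ Hrs) as [H|<-]; [left; auto | lra].
Qed.

Lemma classKL_mono_t r t1 t2 : 0 <= r -> 0 <= t1 -> t1 <= t2 -> beta r t2 <= beta r t1.
Proof. intros Hr. now apply (proj2 Hbeta r Hr). Qed.

Lemma classKL_nonneg r t : 0 <= r -> 0 <= t -> 0 <= beta r t.
Proof.
  intros Hr Ht. rewrite <- (proj1 (proj1 Hbeta t Ht)).
  now apply classKL_mono_r; [| lra |].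
Qed.

End ClassKL.

Lemma traj_shift f df S : 0 < S -> traj_on f df ->
  traj_on (fun t => f (t + S)) (fun t => df (t + S)).
Proof.
  intros HS [H0 Hd]. split.
  - intros eps He.
    assert (Hc : continuous f S).
    { apply (ex_derive_continuous (K:=R_AbsRing) (V:=R_NormedModule)).
      exists (df S). apply Hd; lra. }
    destruct (eps_delta_of_continuous f S Hc eps He) as [d [Hd0 Hy]].
    exists d; split; auto. intros s Hs. rewrite Rplus_0_l. apply Hy.
    replace (s + S - S) with s by ring. rewrite Rabs_pos_eq; lra.
  - intros t Ht.
    assert (Hg : is_derive (fun t => t + S) t 1) by (auto_derive; auto; ring).
    pose proof (is_derive_comp f (fun t => t + S) t (df (t + S)) 1 (Hd (t + S) ltac:(lra)) Hg)
      as Hcomp.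
    change (scal 1 (df (t + S))) with (1 * df (t + S)) in Hcomp.
    now rewrite Rmult_1_l in Hcomp.
Qed.

Lemma platoon_shift Kp Kv lam gp gv a b N x1 x2 x3 S : 0 < S ->
  platoon_sol Kp Kv lam gp gv a b N x1 x2 x3 ->
  platoon_sol Kp Kv lam gp gv a b N
    (fun j t => x1 j (t + S)) (fun j t => x2 j (t + S)) (fun j t => x3 j (t + S)).
Proof.
  intros HS H i Hi. destruct (H i Hi) as [T1 [T2 T3]].
  split; [|split].
  - exact (traj_shift _ _ S HS T1).
  - exact (traj_shift _ _ S HS T2).
  - exact (traj_shift _ _ S HS T3).
Qed.

Lemma finite_upper_bound (f : nat -> R) N :
  exists A, 0 <= A /\ forall i, (i <= N)%nat -> f i <= A.
Proof.
  induction N as [|N [A [HA H]]].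
  - exists (Rmax 0 (f 0%nat)). split; [apply Rmax_l|]. intros i Hi.
    replace i with 0%nat by lia. apply Rmax_r.
  - exists (Rmax A (f (S N))). split; [eapply Rle_trans; [exact HA | apply Rmax_l]|].
    intros i Hi. destruct (Nat.eq_dec i (S N)) as [->|Hne]; [apply Rmax_r|].
    eapply Rle_trans; [apply H; lia | apply Rmax_l].
Qed.

Lemma eventually_all (P : nat -> R -> Prop) i :
  (forall j, (j < i)%nat -> exists T, forall tau, T < tau -> P j tau) ->
  exists T, forall j, (j < i)%nat -> forall tau, T < tau -> P j tau.
Proof.
  induction i as [|i IHi]; intros H.
  - exists 0. intros; lia.
  - destruct IHi as [T1 H1]; [intros j Hj; apply H; lia|].
    destruct (H i ltac:(lia)) as [T2 H2].
    exists (Rmax T1 T2). intros j Hj tau Htau.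
    destruct (Nat.eq_dec j i) as [->|Hne].
    + apply H2. eapply Rle_lt_trans; [apply Rmax_r | exact Htau].
    + apply H1; [lia|]. eapply Rle_lt_trans; [apply Rmax_l | exact Htau].
Qed.

Section SmallGain.

Variables Kp Kv lam gp gv a b g : R.
Variable beta : R -> R -> R.
Hypotheses (Hbeta : classKL beta) (Hg : 0 < g < 1)
           (Hgain : gain_estimate Kp Kv lam gp gv a b beta g).

(** Small-gain bound: if beta(|chi_i(0)|, 0) <= A for every pair, then
    |chi_i(t)| <= A / (1 - g) for all pairs and times (induction along the
    platoon: A + g A/(1-g) = A/(1-g)). *)
Lemma uniform_bound N x1 x2 x3 A :
  platoon_sol Kp Kv lam gp gv a b N x1 x2 x3 -> 0 <= A ->
  (forall i, (i <= N)%nat -> beta (chi_norm x1 x2 x3 i 0) 0 <= A) ->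
  forall i, (i <= N)%nat -> forall t, 0 <= t -> chi_norm x1 x2 x3 i t <= A / (1 - g).
Proof.
  intros Hsol HA HbA i.
  induction i as [i IH] using lt_wf_ind. intros Hi t Ht.
  assert (HB : 0 <= A / (1 - g)) by (apply Rdiv_le_0_compat; lra).
  eapply Rle_trans.
  { apply (Hgain N x1 x2 x3 Hsol i Hi t Ht (A / (1 - g)) HB).
    intros j tau Hj Htau. apply IH; [lia | lia | lra]. }
  assert (beta (chi_norm x1 x2 x3 i 0) t <= beta (chi_norm x1 x2 x3 i 0) 0)
    by (apply classKL_mono_t; auto using chi_norm_nonneg; lra).
  specialize (HbA i Hi).
  assert (A + g * (A / (1 - g)) = A / (1 - g)) by (field; lra). lra.
Qed.

(** String stability follows from [uniform_bound] and continuity of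
    beta(., 0) at 0. *)
Lemma string_stable_of_gain : StringStable Kp Kv lam gp gv a b.
Proof.
  intros eps He.
  destruct (proj1 Hbeta 0 (Rle_refl 0)) as [Hzero [Hcont _]].
  assert (HA : 0 < eps * (1 - g) / 2) by (apply Rdiv_lt_0_compat; nra).
  destruct (Hcont 0 (Rle_refl 0) _ HA) as [d [Hd Hsmall]].
  exists d; split; auto. intros N x1 x2 x3 Hsol H0 t Ht i Hi.
  eapply Rle_lt_trans.
  { apply (uniform_bound N x1 x2 x3 (eps * (1 - g) / 2) Hsol (Rlt_le _ _ HA)); auto.
    intros j Hj. pose proof (chi_norm_nonneg x1 x2 x3 j 0).
    specialize (Hsmall (chi_norm x1 x2 x3 j 0) ltac:(assumption)).
    pose proof (classKL_nonneg beta Hbeta (chi_norm x1 x2 x3 j 0) 0 ltac:(assumption)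
                  (Rle_refl 0)).
    rewrite Hzero, !Rminus_0_r, !Rabs_pos_eq in Hsmall by assumption.
    specialize (H0 j Hj). lra. }
  replace (eps * (1 - g) / 2 / (1 - g)) with (eps / 2) by (field; lra). lra.
Qed.

Lemma restarted_estimate N x1 x2 x3 i S B M :
  platoon_sol Kp Kv lam gp gv a b N x1 x2 x3 -> (i <= N)%nat -> 0 < S ->
  chi_norm x1 x2 x3 i S <= B -> 0 <= M ->
  (forall j tau, (j < i)%nat -> S <= tau -> chi_norm x1 x2 x3 j tau <= M) ->
  forall t, 0 <= t -> chi_norm x1 x2 x3 i (t + S) <= beta B t + g * M.
Proof.
  intros Hsol Hi HS HB HM Hpred t Ht.
  pose proof (platoon_shift _ _ _ _ _ _ _ _ _ _ _ S HS Hsol) as Hsh.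
  eapply Rle_trans.
  { apply (Hgain N _ _ _ Hsh i Hi t Ht M HM).
    intros j tau Hj Htau. apply Hpred; [exact Hj | lra]. }
  apply Rplus_le_compat_r, classKL_mono_r; auto.
  - exact (chi_norm_nonneg x1 x2 x3 i (0 + S)).
  - unfold chi_norm in *. now rewrite Rplus_0_l.
Qed.

(** Every pair converges to the origin, by induction along the platoon:
    once the predecessors are below eps/4, pair i ends up below
    beta(B, t) + g eps/4 < eps. *)
Lemma attractive_of_gain N x1 x2 x3 :
  platoon_sol Kp Kv lam gp gv a b N x1 x2 x3 ->
  forall i, (i <= N)%nat -> is_lim (fun t => chi_norm x1 x2 x3 i t) p_infty 0.
Proof.
  intros Hsol.
  destruct (finite_upper_bound (fun i => beta (chi_norm x1 x2 x3 i 0) 0) N)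
    as [A [HA HbA]].
  assert (HB0 : 0 <= A / (1 - g)) by (apply Rdiv_le_0_compat; lra).
  pose proof (uniform_bound N x1 x2 x3 A Hsol HA HbA) as HB.
  intros i. induction i as [i IH] using lt_wf_ind. intros Hi.
  apply is_lim_spec. intros eps. simpl. pose proof (cond_pos eps) as He.
  assert (Hpred : forall j, (j < i)%nat ->
            exists T, forall tau, T < tau -> chi_norm x1 x2 x3 j tau < eps / 4).
  { intros j Hji. pose proof (IH j Hji ltac:(lia)) as L. apply is_lim_spec in L.
    destruct (L (mkposreal (eps / 4) ltac:(lra))) as [T HT]. exists T.
    intros tau Htau. specialize (HT tau Htau). simpl in HT.
    now rewrite Rminus_0_r, Rabs_pos_eq in HT by apply chi_norm_nonneg. }
  destruct (eventually_all _ i Hpred) as [T HT].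
  set (S := Rmax T 0 + 1).
  assert (HS : 0 < S) by (unfold S; pose proof (Rmax_r T 0); lra).
  assert (HST : T < S) by (unfold S; pose proof (Rmax_l T 0); lra).
  pose proof (proj2 (proj2 Hbeta _ HB0)) as Hlim. apply is_lim_spec in Hlim.
  destruct (Hlim (mkposreal (eps / 2) ltac:(lra))) as [T2 HT2]. simpl in HT2.
  exists (S + Rmax T2 0). intros x Hx.
  pose proof (Rmax_l T2 0). pose proof (Rmax_r T2 0).
  assert (Hx_bound : chi_norm x1 x2 x3 i (x - S + S)
                     <= beta (A / (1 - g)) (x - S) + g * (eps / 4)).
  { apply (restarted_estimate N); auto; try lra.
    - apply HB; [exact Hi | lra].
    - intros j tau Hj Htau. left. apply HT; [exact Hj | lra]. }
  replace (x - S + S) with x in Hx_bound by ring.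
  specialize (HT2 (x - S) ltac:(lra)).
  rewrite Rminus_0_r in HT2. apply Rabs_lt_between in HT2.
  rewrite Rminus_0_r, Rabs_pos_eq by apply chi_norm_nonneg.
  assert (g * (eps / 4) < eps / 4) by nra. lra.
Qed.

Lemma asymptotic_string_stability_of_gain :
  AsymptoticallyStringStable Kp Kv lam gp gv a b.
Proof.
  split; [exact string_stable_of_gain | exact attractive_of_gain].
Qed.

End SmallGain.

Theorem theorem2 (Kp Kv lam gp gv : R) :
  0 < Kp -> 0 < Kv -> 0 < lam -> 0 < gp -> 0 < gv ->
  (* (1) isolated subsystem: origin globally exponentially stable *)
  (exists c k, 0 < c /\ 0 < k /\
     forall x1 x2 x3 : R -> R,
       pair_sol Kp Kv lam (fun _ => 0) x1 x2 x3 ->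
       forall t, 0 <= t ->
         nrm3 (x1 t) (x2 t) (x3 t) <= c * exp (- k * t) * nrm3 (x1 0) (x2 0) (x3 0)) /\
  (* (2) gain estimate for every a, b >= 0 *)
  (forall a b, 0 <= a -> 0 <= b ->
     exists beta g, classKL beta /\ 0 < g /\ gain_estimate Kp Kv lam gp gv a b beta g) /\
  (* (3a) some a, b >= 0, not both zero, give a gain in (0,1) *)
  (exists a b, 0 <= a /\ 0 <= b /\ (a <> 0 \/ b <> 0) /\
     exists beta g, classKL beta /\ 0 < g < 1 /\ gain_estimate Kp Kv lam gp gv a b beta g) /\
  (* (3b) for such a, b the origin is Asymptotically String Stable *)
  (forall a b, 0 <= a -> 0 <= b ->
     (exists beta g, classKL beta /\ 0 < g < 1 /\ gain_estimate Kp Kv lam gp gv a b beta g) ->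
     AsymptoticallyStringStable Kp Kv lam gp gv a b).
Proof.
  intros HKp HKv Hl Hgp Hgv.
  pose proof (decay_rate_pos Kp Kv lam HKp HKv Hl) as Hk.
  pose proof (overshoot_pos Kp Kv lam HKp HKv Hl) as HC.
  pose proof (iss_gain_pos Kp Kv lam HKp HKv Hl) as HG.
  assert (HKL : classKL (exp_KL (overshoot Kp Kv lam) (decay_rate Kp Kv lam / 2)))
    by (apply exp_KL_classKL; lra).
  split; [|split; [|split]].
  -
    exists (overshoot Kp Kv lam), (decay_rate Kp Kv lam / 2).
    split; [exact HC | split; [lra|]]. intros x1 x2 x3 Hsol t Ht.
    pose proof (pair_iss Kp Kv lam HKp HKv Hl _ _ _ _ t 0 Hsol Ht (Rle_refl 0))
      as Hiss.
    rewrite Rmult_0_r, Rplus_0_r in Hiss. apply Hiss.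
    intros s _. rewrite Rabs_R0. lra.
  - intros a b Ha Hb.
    exists (exp_KL (overshoot Kp Kv lam) (decay_rate Kp Kv lam / 2)),
      (coupling_gain Kp Kv lam gp gv a b + 1).
    assert (0 <= coupling_gain Kp Kv lam gp gv a b)
      by (unfold coupling_gain; apply Rmult_le_pos; nra).
    split; [exact HKL | split; [lra|]].
    apply platoon_gain_estimate; auto; lra.
  - (* b = 0 and a chosen so that the coupling gain is 1/2 *)
    set (a := 1 / (4 * iss_gain Kp Kv lam * gp)).
    assert (Ha : 0 < a) by (apply Rdiv_lt_0_compat; nra).
    exists a, 0. split; [lra | split; [lra | split; [left; lra|]]].
    exists (exp_KL (overshoot Kp Kv lam) (decay_rate Kp Kv lam / 2)), (1 / 2).
    split; [exact HKL | split; [lra|]].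
    apply platoon_gain_estimate; auto; try lra.
    unfold coupling_gain, a. right. field. lra.
  - intros a b _ _ [beta [g [Hbeta [Hg Hgain]]]].
    exact (asymptotic_string_stability_of_gain _ _ _ _ _ _ _ _ _ Hbeta Hg Hgain).
Qed.
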